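(* Let $\Gamma=(V,E)$ be a layered graph with unique minimal vertex $*$. Then $A(\Gamma)\cong T(V_+)/R_V$, where $R_V$ is the two-sided ideal of $T(V_+)$ generated by $\{\tilde e(\pi,i)-\tilde e(\pi',i): \pi\approx\pi',\ 0\le i\le \|\pi\|\}$.
   Context: A layered graph is a finite directed graph $\Gamma=(V,E)$ with $V=\bigsqcup_{i=0}^{N}V_i$ such that every edge $(v,w)\in E$ with $v\in V_i$ has $w\in V_{i-1}$. Write $V_+=\bigsqcup_{i\ge1}V_i$ and $S(v)=\{w:(v,w)\in E\}$; it is assumed that $S(v)\neq\emptyset$ for every $v\in V_+$. $\Gamma$ has unique minimal vertex $*$ if $V_0=\{*\}$. A path is a sequence of edges $\pi=(e_1,\dots,e_m)$ with head of $e_i$ = tail of $e_{i+1}$, of length $\|\pi\|=m$; $\pi\approx\pi'$ means same length, same start and same end. Fix a field $\mathbb F$; $T(X)$ is the free associative algebra on $X$. For a path $\pi=(e_1,\dots,e_m)$ define $e(\pi,i)\in T(E)$ by $(t-e_1)(t-e_2)\cdots(t-e_m)=\sum_{i}e(\pi,i)t^i$ in $T(E)[t]$ with $t$ a central indeterminate. The universal labeling algebra is $A(\Gamma)=T(E)/R$, where $R$ is generated by $e(\pi,i)-e(\pi',i)$ for all $\pi\approx\pi'$, $0\le i\le\|\pi\|$. Let $\phi'':T(E)\to T(V_+)$ be the algebra map with $\phi''((v,w))=v-w$ if $w\neq *$ and $\phi''((v,w))=v$ if $w=*$, and set $\tilde e(\pi,i)=\phi''(e(\pi,i))$. *)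

From HB Require Import structures.
From mathcomp Require Import all_boot all_order all_algebra.
Set Implicit Arguments. Unset Strict Implicit. Unset Printing Implicit Defensive.
Import GRing.Theory.
Local Open Scope ring_scope.

(* The free associative algebra T(X) over a field F.                        *)
(* An element is represented by a finite formal sum of monomials            *)
(* (coefficient, word); two representations denote the same element of      *)
(* T(X) iff they have the same coefficient function [nc_coef].              *)
Section FreeAlg.
Variables (F : fieldType) (X : eqType).

Definition ncexpr := seq (F * seq X).

Definition nc_coef (p : ncexpr) (w : seq X) : F := \sum_(t <- p | t.2 == w) t.1.

Definition nc_zero : ncexpr := [::].
Definition nc_one : ncexpr := [:: (1, [::])].
Definition nc_var (x : X) : ncexpr := [:: (1, [:: x])].
Definition nc_add (p q : ncexpr) : ncexpr := p ++ q.
Definition nc_scale (c : F) (p : ncexpr) : ncexpr := [seq (c * t.1, t.2) | t <- p].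
Definition nc_sub (p q : ncexpr) : ncexpr := nc_add p (nc_scale (-1) q).
Definition nc_mul (p q : ncexpr) : ncexpr :=
  [seq (a.1 * b.1, a.2 ++ b.2) | a <- p, b <- q].
Definition nc_sum (ps : seq ncexpr) : ncexpr := flatten ps.

Definition nc_in_ideal (S : ncexpr -> Prop) (p : ncexpr) : Prop :=
  exists ts : seq (ncexpr * ncexpr * ncexpr),
    (forall t, t \in ts -> S t.1.2) /\
    forall w, nc_coef p w =
      nc_coef (nc_sum [seq nc_mul (nc_mul t.1.1 t.1.2) t.2 | t <- ts]) w.

(* e(pi, i): coefficient of t^i in (t - x_1)(t - x_2)...(t - x_m) *)
Fixpoint nc_elem (s : seq X) (i : nat) : ncexpr :=
  match s with
  | [::] => if i == 0%N then nc_one else nc_zero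
  | x :: s' => nc_sub (match i with 0%N => nc_zero | j.+1 => nc_elem s' j end)
                      (nc_mul (nc_var x) (nc_elem s' i))
  end.
End FreeAlg.

Section Subst.
Variables (F : fieldType) (X Y : eqType) (f : X -> ncexpr F Y).
Definition nc_subst (p : ncexpr F X) : ncexpr F Y :=
  nc_sum [seq nc_scale t.1 (foldr (fun x acc => nc_mul (f x) acc) (nc_one F Y) t.2)
         | t <- p].
End Subst.

(* V finite, layer : V -> nat gives V_i = layer^-1(i); adj v w = (v,w) in E *)
Section Layered.
Variables (V : finType) (layer : V -> nat) (adj : rel V) (star : V).

Definition layered_unique_min : Prop :=
  (forall v w, adj v w -> layer v = (layer w).+1) /\
  (forall v, (0 < layer v)%N -> exists w, adj v w) /\
  (forall v, layer v = 0%N <-> v = star).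

Definition Edge := {p : V * V | adj p.1 p.2}.
Definition Vplus := {v : V | (0 < layer v)%N}.

Definition is_gpath (s : seq Edge) : bool :=
  match s with
  | [::] => true
  | e :: s' => path (fun a b : Edge => (val a).2 == (val b).1) e s'
  end.

Definition gapprox (s s' : seq Edge) : Prop :=
  size s = size s' /\
  match s, s' with
  | e :: _, e' :: _ => (val e).1 = (val e').1 /\
                       (val (last e s)).2 = (val (last e' s')).2
  | _, _ => True
  end.

Variable F : fieldType.

Definition R_gen (p : ncexpr F Edge) : Prop :=
  exists s s' i, is_gpath s /\ is_gpath s' /\ gapprox s s' /\ (i <= size s)%N /\
    p = nc_sub (@nc_elem F Edge s i) (@nc_elem F Edge s' i).

(* the variable of T(V_+) attached to v, or 0 if v \notin V_+ (i.e. v = star) *)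
Definition ivar (v : V) : ncexpr F Vplus :=
  match (insub v : option Vplus) with Some u => nc_var F u | None => nc_zero F Vplus end.

(* phi''((v,w)) = v - w if w <> star, v if w = star *)
Definition phi2 (e : Edge) : ncexpr F Vplus := nc_sub (ivar (val e).1) (ivar (val e).2).

Definition etilde (s : seq Edge) (i : nat) : ncexpr F Vplus :=
  nc_subst phi2 (@nc_elem F Edge s i).

Definition RV_gen (q : ncexpr F Vplus) : Prop :=
  exists s s' i, is_gpath s /\ is_gpath s' /\ gapprox s s' /\ (i <= size s)%N /\
    q = nc_sub (etilde s i) (etilde s' i).
End Layered.

From HB Require Import structures.
From mathcomp Require Import all_boot all_order all_algebra.
From mathcomp Require Import ring.
Set Implicit Arguments. Unset Strict Implicit. Unset Printing Implicit Defensive.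
Import GRing.Theory.
Local Open Scope ring_scope.

(* An element p of T(X) is a formal sum of monomials; we handle it through its
   pairing [ncval p h] with an arbitrary function h on words.  Two expressions
   denote the same element of T(X) iff all their pairings agree, so every
   algebraic identity in T(X) becomes an identity between scalar sums.

   An abstract criterion then says: if f maps the generators of I onto the
   generators of J, f(g(y)) = y for all variables y, and x - g(f(x)) lies in I
   for all variables x, then f and g induce inverse isomorphisms of quotients.

   For the graph we take f = phi'' and let g(v) be the sum of the edges of a
   fixed descending path from v to *.  phi'' telescopes along such a path, so
   f(g(v)) = v; and x - g(f(x)) is, up to sign, the relation e(pi, m-1) -
   e(pi', m-1) = -(sum of pi) + (sum of pi') for the two paths pi = (v,w).P(w)
   and pi' = P(v) from v to *. *)

Section Pairing.
Variables (F : fieldType) (X : eqType).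
Implicit Types (p q : ncexpr F X) (h : seq X -> F).

Definition ncval p h : F := \sum_(t <- p) t.1 * h t.2.

Definition nc_equiv p q := forall h, ncval p h = ncval q h.

Lemma ncval_ext p h1 h2 : (forall u, h1 u = h2 u) -> ncval p h1 = ncval p h2.
Proof. by move=> e; apply: eq_bigr => t _; rewrite e. Qed.

Lemma ncval_cons t p h : ncval (t :: p) h = t.1 * h t.2 + ncval p h.
Proof. by rewrite /ncval big_cons. Qed.

Lemma ncval_zero h : ncval (nc_zero F X) h = 0.
Proof. by rewrite /ncval big_nil. Qed.

Lemma ncval_add p q h : ncval (nc_add p q) h = ncval p h + ncval q h.
Proof. by rewrite /ncval big_cat. Qed.

Lemma ncval_scale c p h : ncval (nc_scale c p) h = c * ncval p h.
Proof. by rewrite /ncval big_map mulr_sumr; apply: eq_bigr => t _ /=; rewrite mulrA. Qed.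

Lemma ncval_sub p q h : ncval (nc_sub p q) h = ncval p h - ncval q h.
Proof. by rewrite ncval_add ncval_scale mulN1r. Qed.

Lemma ncval_one h : ncval (nc_one F X) h = h [::].
Proof. by rewrite ncval_cons ncval_zero addr0 mul1r. Qed.

Lemma ncval_var x h : ncval (nc_var F x) h = h [:: x].
Proof. by rewrite ncval_cons ncval_zero addr0 mul1r. Qed.

Lemma ncval_mul p q h :
  ncval (nc_mul p q) h = ncval p (fun u => ncval q (fun v => h (u ++ v))).
Proof.
rewrite /ncval /nc_mul big_allpairs_dep; apply: eq_bigr => a _.
by rewrite mulr_sumr; apply: eq_bigr => b _ /=; rewrite mulrA.
Qed.

Lemma ncval_sum ps h : ncval (nc_sum ps) h = \sum_(p <- ps) ncval p h.
Proof. by rewrite /ncval /nc_sum big_flatten. Qed.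

Lemma ncval_subh p h1 h2 :
  ncval p (fun u => h1 u - h2 u) = ncval p h1 - ncval p h2.
Proof. by rewrite /ncval -sumrB; apply: eq_bigr => t _; rewrite mulrBr. Qed.

Lemma ncval_sumh (I : Type) (r : seq I) p (g : I -> seq X -> F) :
  ncval p (fun u => \sum_(i <- r) g i u) = \sum_(i <- r) ncval p (g i).
Proof. by rewrite /ncval exchange_big; apply: eq_bigr => t _; rewrite mulr_sumr. Qed.

Lemma ncval_zeroh p : ncval p (fun _ => 0) = 0.
Proof. by rewrite /ncval big1 // => t _; rewrite mulr0. Qed.

Lemma ncval_mul_equiv p p' q q' :
  nc_equiv p p' -> nc_equiv q q' -> nc_equiv (nc_mul p q) (nc_mul p' q').
Proof. by move=> e1 e2 h; rewrite !ncval_mul e1; apply: ncval_ext => u; apply: e2. Qed.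

Lemma coef_ncval p w : nc_coef p w = ncval p (fun u => (u == w)%:R).
Proof.
rewrite /nc_coef /ncval big_mkcond; apply: eq_bigr => t _.
by case: eqP => _; rewrite ?mulr1 ?mulr0.
Qed.

Lemma ncval_coef p (U : seq (seq X)) h :
  uniq U -> {subset [seq t.2 | t <- p] <= U} ->
  ncval p h = \sum_(u <- U) nc_coef p u * h u.
Proof.
move=> uU; elim: p => [|t p IH] sub.
  by rewrite ncval_zero big1 // => u _; rewrite /nc_coef big_nil mul0r.
rewrite ncval_cons IH; last by move=> u Hu; apply: sub; rewrite inE Hu orbT.
have tU : t.2 \in U by apply: sub; rewrite inE eqxx.
have -> : \sum_(u <- U) nc_coef (t :: p) u * h u =
  \sum_(u <- U) ((t.2 == u)%:R * t.1 * h u) + \sum_(u <- U) nc_coef p u * h u.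
  rewrite -big_split; apply: eq_bigr => u _ /=.
  by rewrite /nc_coef big_cons; case: eqP => _; rewrite ?mul1r ?mul0r ?add0r ?mulrDl.
congr (_ + _); rewrite (bigD1_seq t.2) //= eqxx mul1r big1 ?addr0 // => u.
by rewrite eq_sym => /negbTE ->; rewrite !mul0r.
Qed.

Lemma nc_equivP p q : (forall w, nc_coef p w = nc_coef q w) <-> nc_equiv p q.
Proof.
split=> [e h|e w]; last by rewrite !coef_ncval.
pose U := undup ([seq t.2 | t <- p] ++ [seq t.2 | t <- q]).
have uU : uniq U by apply: undup_uniq.
rewrite (@ncval_coef p U) //; last by move=> u Hu; rewrite mem_undup mem_cat Hu.
rewrite (@ncval_coef q U) //; last by move=> u Hu; rewrite mem_undup mem_cat Hu orbT.
by apply: eq_bigr => u _; rewrite e.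
Qed.

Section Ideal.
Variable S : ncexpr F X -> Prop.

Definition ideal_comb (ts : seq (ncexpr F X * ncexpr F X * ncexpr F X)) :=
  nc_sum [seq nc_mul (nc_mul t.1.1 t.1.2) t.2 | t <- ts].

Lemma ncval_ideal_comb ts h : ncval (ideal_comb ts) h =
  \sum_(t <- ts) ncval (nc_mul (nc_mul t.1.1 t.1.2) t.2) h.
Proof. by rewrite /ideal_comb ncval_sum big_map. Qed.

Lemma in_idealP p : nc_in_ideal S p <->
  exists ts, (forall t, t \in ts -> S t.1.2) /\ nc_equiv p (ideal_comb ts).
Proof.
by split=> -[ts [H1 H2]]; exists ts; split => //; apply/nc_equivP.
Qed.

Lemma ideal_equiv p q : nc_in_ideal S p -> nc_equiv p q -> nc_in_ideal S q.
Proof.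
move=> /in_idealP [ts [H1 H2]] e; apply/in_idealP; exists ts; split => // h.
by rewrite -e.
Qed.

Lemma ideal_zero p : nc_equiv p (nc_zero F X) -> nc_in_ideal S p.
Proof.
by move=> e; apply/in_idealP; exists [::].
Qed.

Lemma ideal_gen s : S s -> nc_in_ideal S s.
Proof.
move=> Hs; apply/in_idealP; exists [:: (nc_one F X, s, nc_one F X)]; split.
  by move=> t; rewrite inE => /eqP ->.
move=> h; rewrite ncval_ideal_comb big_cons big_nil addr0 /= !ncval_mul ncval_one.
by apply: ncval_ext => u; rewrite ncval_one cats0.
Qed.

Lemma ideal_add p q :
  nc_in_ideal S p -> nc_in_ideal S q -> nc_in_ideal S (nc_add p q).
Proof.
move=> /in_idealP [ts1 [A1 B1]] /in_idealP [ts2 [A2 B2]].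
apply/in_idealP; exists (ts1 ++ ts2); split.
  by move=> t; rewrite mem_cat => /orP [] ?; [apply: A1 | apply: A2].
by move=> h; rewrite ncval_add B1 B2 !ncval_ideal_comb big_cat.
Qed.

Lemma ideal_mull a p : nc_in_ideal S p -> nc_in_ideal S (nc_mul a p).
Proof.
move=> /in_idealP [ts [A B]].
apply/in_idealP; exists [seq (nc_mul a t.1.1, t.1.2, t.2) | t <- ts]; split.
  by move=> t /mapP [t' Ht' ->]; apply: A Ht'.
move=> h; rewrite ncval_mul (ncval_ext _ (fun u => B (fun v => h (u ++ v)))).
rewrite ncval_ideal_comb big_map.
rewrite (ncval_ext _ (fun u => ncval_ideal_comb ts (fun v => h (u ++ v)))) ncval_sumh.
apply: eq_bigr => t _ /=; rewrite !ncval_mul; apply: ncval_ext => u.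
rewrite !ncval_mul; do 3!apply: ncval_ext => ?.
by rewrite !catA.
Qed.

Lemma ideal_mulr p b : nc_in_ideal S p -> nc_in_ideal S (nc_mul p b).
Proof.
move=> /in_idealP [ts [A B]].
apply/in_idealP; exists [seq (t.1.1, t.1.2, nc_mul t.2 b) | t <- ts]; split.
  by move=> t /mapP [t' Ht' ->]; apply: A Ht'.
move=> h; rewrite ncval_mul B !ncval_ideal_comb big_map.
apply: eq_bigr => t _ /=; rewrite !ncval_mul; do 2!apply: ncval_ext => ?.
by rewrite ncval_mul; do 2!apply: ncval_ext => ?; rewrite catA.
Qed.

Lemma ideal_scale c p : nc_in_ideal S p -> nc_in_ideal S (nc_scale c p).
Proof.
move=> Hp; apply: (ideal_equiv (ideal_mull [:: (c, [::])] Hp)) => h.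
by rewrite ncval_mul ncval_scale ncval_cons ncval_zero addr0.
Qed.

Lemma ideal_sub p q :
  nc_in_ideal S p -> nc_in_ideal S q -> nc_in_ideal S (nc_sub p q).
Proof. by move=> Hp Hq; apply: ideal_add => //; apply: ideal_scale. Qed.

Lemma ideal_sum ps :
  (forall p, p \in ps -> nc_in_ideal S p) -> nc_in_ideal S (nc_sum ps).
Proof.
elim: ps => [|p ps IH] H; first by apply: ideal_zero.
apply: (ideal_equiv (ideal_add (H p (mem_head _ _)) (IH _))) => [q Hq|h].
  by apply: H; rewrite inE Hq orbT.
by rewrite ncval_add !ncval_sum ?big_cons.
Qed.
End Ideal.
End Pairing.

Lemma ncval_swap (F : fieldType) (X Y : eqType) (p : ncexpr F X) (q : ncexpr F Y)
    (k : seq X -> seq Y -> F) :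
  ncval p (fun u => ncval q (k u)) = ncval q (fun v => ncval p (k^~ v)).
Proof.
rewrite /ncval; under eq_bigr do rewrite mulr_sumr.
rewrite exchange_big; apply: eq_bigr => b _; rewrite mulr_sumr.
by apply: eq_bigr => a _; rewrite mulrCA.
Qed.

Section Substitution.
Variables (F : fieldType) (X Y : eqType).
Implicit Types (k : X -> ncexpr F Y) (p q : ncexpr F X) (h : seq Y -> F).

Definition subst_word k (u : seq X) : ncexpr F Y :=
  foldr (fun x acc => nc_mul (k x) acc) (nc_one F Y) u.

Lemma ncval_subst_word_cons k x u h : ncval (subst_word k (x :: u)) h =
  ncval (k x) (fun a => ncval (subst_word k u) (fun b => h (a ++ b))).
Proof. exact: ncval_mul. Qed.

Lemma ncval_subst_word_cat k u v h : ncval (subst_word k (u ++ v)) h =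
  ncval (subst_word k u) (fun a => ncval (subst_word k v) (fun b => h (a ++ b))).
Proof.
elim: u h => [|x u IH] h; first by rewrite ncval_one.
rewrite cat_cons !ncval_subst_word_cons; apply: ncval_ext => a; rewrite IH.
by do 2!apply: ncval_ext => ?; rewrite catA.
Qed.

Lemma ncval_subst k p h :
  ncval (nc_subst k p) h = ncval p (fun u => ncval (subst_word k u) h).
Proof.
by rewrite /nc_subst ncval_sum big_map; apply: eq_bigr => t _; rewrite ncval_scale.
Qed.

Lemma nc_subst_mul k p q :
  nc_equiv (nc_subst k (nc_mul p q)) (nc_mul (nc_subst k p) (nc_subst k q)).
Proof.
move=> h; rewrite ncval_subst !ncval_mul ncval_subst; apply: ncval_ext => u.
rewrite (ncval_ext _ (fun v => ncval_subst_word_cat k u v h)).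
rewrite (ncval_swap (subst_word k u) (nc_subst k q)) ncval_subst.
by apply: ncval_ext => v; apply: ncval_swap.
Qed.

Lemma nc_subst_equiv k1 k2 p : (forall x, nc_equiv (k1 x) (k2 x)) ->
  nc_equiv (nc_subst k1 p) (nc_subst k2 p).
Proof.
move=> e h; rewrite !ncval_subst; apply: ncval_ext => u.
elim: u h => [|x u IH] h; first by rewrite !ncval_one.
by rewrite !ncval_subst_word_cons e; apply: ncval_ext => a; rewrite IH.
Qed.

Lemma subst_ideal k S T p :
  (forall s, S s -> nc_in_ideal T (nc_subst k s)) ->
  nc_in_ideal S p -> nc_in_ideal T (nc_subst k p).
Proof.
move=> HS /in_idealP [ts [A B]].
pose ps := [seq nc_mul (nc_mul (nc_subst k t.1.1) (nc_subst k t.1.2))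
                       (nc_subst k t.2) | t <- ts].
apply: (@ideal_equiv _ _ _ (nc_sum ps)).
  apply: ideal_sum => q /mapP [t Ht ->]; apply: ideal_mulr; apply: ideal_mull.
  exact: HS (A t Ht).
move=> h; rewrite ncval_sum big_map ncval_subst B ncval_ideal_comb.
apply: eq_bigr => t _; rewrite -ncval_subst nc_subst_mul.
by apply: ncval_mul_equiv => // h'; rewrite nc_subst_mul.
Qed.

Lemma subst_congr_ideal k1 k2 T :
  (forall x, nc_in_ideal T (nc_sub (k1 x) (k2 x))) ->
  forall p, nc_in_ideal T (nc_sub (nc_subst k1 p) (nc_subst k2 p)).
Proof.
move=> Hk.
have Hw u : nc_in_ideal T (nc_sub (subst_word k1 u) (subst_word k2 u)).
  elim: u => [|x u IH]; first by apply: ideal_zero => h; rewrite ncval_sub subrr ncval_zero.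
  apply: (ideal_equiv (ideal_add (ideal_mulr (subst_word k1 u) (Hk x))
                                 (ideal_mull (k2 x) IH))) => h.
  rewrite ncval_add ncval_sub !ncval_subst_word_cons !ncval_mul ncval_sub.
  by rewrite (ncval_ext _ (fun a => ncval_sub _ _ _)) ncval_subh; ring.
move=> p.
apply: (@ideal_equiv _ _ _
  (nc_sum [seq nc_scale t.1 (nc_sub (subst_word k1 t.2) (subst_word k2 t.2)) | t <- p])).
  by apply: ideal_sum => q /mapP [t Ht ->]; apply: ideal_scale.
move=> h; rewrite ncval_sum big_map ncval_sub !ncval_subst -ncval_subh [in RHS]/ncval.
by apply: eq_bigr => t _; rewrite ncval_scale ncval_sub.
Qed.

End Substitution.

Lemma nc_subst_var (F : fieldType) (X : eqType) (p : ncexpr F X) : nc_equiv (nc_subst (@nc_var F X) p) p.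
Proof.
move=> h; rewrite ncval_subst; apply: ncval_ext => u.
elim: u h => [|x u IH] h; first by rewrite ncval_one.
by rewrite ncval_subst_word_cons ncval_var IH.
Qed.

Lemma nc_subst_comp (F : fieldType) (X Y Z : eqType)
    (f : X -> ncexpr F Y) (g : Y -> ncexpr F Z) (p : ncexpr F X) :
  nc_equiv (nc_subst g (nc_subst f p)) (nc_subst (fun x => nc_subst g (f x)) p).
Proof.
move=> h; symmetry; rewrite !ncval_subst; apply: ncval_ext => u.
elim: u h => [|x u IH] h; first by rewrite !ncval_one.
rewrite !ncval_subst_word_cons ncval_subst; apply: ncval_ext => c.
rewrite (ncval_ext _ (fun a => IH _)).
rewrite (ncval_swap (subst_word g c) (subst_word f u)
  (fun a d => ncval (subst_word g d) (fun b => h (a ++ b)))).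
by apply: ncval_ext => d; rewrite ncval_subst_word_cat.
Qed.

Section IsoCriterion.
Variables (F : fieldType) (X Y : eqType).
Variables (S : ncexpr F X -> Prop) (T : ncexpr F Y -> Prop).
Variables (f : X -> ncexpr F Y) (g : Y -> ncexpr F X).

Hypothesis f_gen : forall s, S s -> nc_in_ideal T (nc_subst f s).
Hypothesis gen_f : forall t, T t -> exists2 s, S s & nc_equiv t (nc_subst f s).
Hypothesis gf_var : forall x, nc_in_ideal S (nc_sub (nc_var F x) (nc_subst g (f x))).
Hypothesis fg_var : forall y, nc_equiv (nc_subst f (g y)) (nc_var F y).

Lemma gf_ideal p : nc_in_ideal S (nc_sub p (nc_subst g (nc_subst f p))).
Proof.
apply: (ideal_equiv (subst_congr_ideal gf_var p)) => h.
by rewrite !ncval_sub nc_subst_var nc_subst_comp.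
Qed.

Lemma fg_ideal q : nc_in_ideal T (nc_sub q (nc_subst f (nc_subst g q))).
Proof.
apply: ideal_zero => h; rewrite ncval_sub nc_subst_comp ncval_zero.
by rewrite (nc_subst_equiv _ fg_var) nc_subst_var subrr.
Qed.

(* g maps each generator t = f(s) to g(f(s)), which is s modulo (S). *)
Lemma g_gen t : T t -> nc_in_ideal S (nc_subst g t).
Proof.
move=> /gen_f [s Ss et].
apply: (ideal_equiv (ideal_sub (ideal_gen Ss) (gf_ideal s))) => h.
by rewrite !ncval_sub [RHS]ncval_subst et -ncval_subst; ring.
Qed.

Lemma quotient_iso :
  (forall p, nc_in_ideal S p -> nc_in_ideal T (nc_subst f p)) /\
  (forall q, nc_in_ideal T q -> nc_in_ideal S (nc_subst g q)) /\
  (forall p, nc_in_ideal S (nc_sub p (nc_subst g (nc_subst f p)))) /\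
  (forall q, nc_in_ideal T (nc_sub q (nc_subst f (nc_subst g q)))).
Proof.
split; first by move=> p; apply: subst_ideal f_gen.
split; first by move=> q; apply: subst_ideal g_gen.
by split; [apply: gf_ideal | apply: fg_ideal].
Qed.
End IsoCriterion.

Section ElementaryCoefficients.
Variables (F : fieldType) (X : eqType).
Implicit Types (h : seq X -> F) (s : seq X).

Lemma elem_above_size s i h : (size s < i)%N -> ncval (nc_elem F s i) h = 0.
Proof.
elim: s i h => [|x s IH] [|i] h //= Hi; first by rewrite ncval_zero.
rewrite ncval_sub (IH i h Hi) ncval_mul.
by rewrite (ncval_ext _ (fun u => IH i.+1 _ (ltnW Hi))) ncval_zeroh subr0.
Qed.

(* e(pi, |pi|) = 1: the polynomial is monic. *)
Lemma elem_size s h : ncval (nc_elem F s (size s)) h = h [::].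
Proof.
elim: s h => [|x s IH] h /=; first by rewrite ncval_one.
rewrite ncval_sub IH ncval_mul.
by rewrite (ncval_ext _ (fun u => elem_above_size _ (ltnSn (size s)))) ncval_zeroh subr0.
Qed.

Lemma elem_subtop x s h :
  ncval (nc_elem F (x :: s) (size s)) h = - \sum_(e <- x :: s) h [:: e].
Proof.
elim: s x h => [|y s IH] x h /=.
  by rewrite ncval_sub ncval_zero ncval_mul ncval_var ncval_one big_seq1 sub0r.
rewrite ncval_sub IH ncval_mul ncval_var.
rewrite (elem_size (y :: s) (fun v => h ([:: x] ++ v))) (big_cons _ _ x) /=; ring.
Qed.
End ElementaryCoefficients.

Section LayeredGraph.
Variables (F : fieldType) (V : finType) (layer : V -> nat) (adj : rel V) (star : V).
Hypothesis graphP : layered_unique_min layer adj star.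

Local Notation Edge := (Edge adj).
Local Notation Vplus := (Vplus layer).
Local Notation ivar := (@ivar V layer F).
Local Notation phi2 := (@phi2 V layer adj F).

Lemma adj_layer v w : adj v w -> layer v = (layer w).+1.
Proof. by case: graphP => H _; apply: H. Qed.

Lemma layer0_star v : layer v = 0%N -> v = star.
Proof. by case: graphP => _ [_ H] /H. Qed.

Lemma layer_star : layer star = 0%N.
Proof. by case: graphP => _ [_ H]; apply/H. Qed.

Definition down (v : V) : V := odflt v [pick w | adj v w].

Lemma adj_down v : (0 < layer v)%N -> adj v (down v).
Proof.
case: graphP => _ [H _] /H [w Hw]; rewrite /down.
by case: pickP => [w' //|/(_ w)]; rewrite Hw.
Qed.

Fixpoint descent (n : nat) (v : V) : seq Edge :=
  if n is n'.+1 then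
    if (insub (v, down v) : option Edge) is Some e then e :: descent n' (down v)
    else [::]
  else [::].

Lemma descent_step n v : layer v = n.+1 ->
  exists2 e : Edge, val e = (v, down v) &
    descent n.+1 v = e :: descent n (down v) /\ layer (down v) = n.
Proof.
move=> Hv; have Hadj : adj v (down v) by apply: adj_down; rewrite Hv.
exists (Sub (v, down v) Hadj); first by rewrite SubK.
rewrite /= (@insubT _ (fun p : V * V => adj p.1 p.2) Edge (v, down v) Hadj).
by split=> //; move: (adj_layer Hadj); rewrite Hv => -[].
Qed.

Definition to_star (v : V) : seq Edge := descent (layer v) v.

Definition path_to_star (v : V) (s : seq Edge) : Prop :=
  is_gpath s /\
  if s is e :: s' then (val e).1 = v /\ (val (last e s')).2 = star else v = star.

Lemma path_to_star_cons (e : Edge) s v w :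
  val e = (v, w) -> path_to_star w s -> path_to_star v (e :: s).
Proof.
move=> ve [ps ends]; rewrite /path_to_star.
case: s ps ends => [|e' s'] ps /= ends; first by rewrite ve ends.
by case: ends => e1 ->; rewrite ve e1 eqxx; split.
Qed.

Lemma to_star_spec v : size (to_star v) = layer v /\ path_to_star v (to_star v).
Proof.
suff descent_spec n : forall u, layer u = n ->
    size (descent n u) = n /\ path_to_star u (descent n u) by apply: descent_spec.
elim: n => [|n IH] {}v Hv; first by rewrite (layer0_star Hv).
have [e ve [-> Hdown]] := descent_step Hv.
have [sz P] := IH _ Hdown; rewrite /= sz; split=> //.
exact: path_to_star_cons ve P.
Qed.

Lemma path_to_star_gapprox v s s' :
  path_to_star v s -> path_to_star v s' -> size s = size s' -> gapprox s s'.
Proof.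
case: s => [|e s] [_ E]; case: s' => [|e' s'] [_ E'] // sz; split=> //.
by case: E E' => -> -> [-> ->].
Qed.

Lemma telescope (a : V -> F) (e : Edge) s : is_gpath (e :: s) ->
  \sum_(d <- e :: s) (a (val d).1 - a (val d).2) = a (val e).1 - a (val (last e s)).2.
Proof.
elim: s e => [|e' s IH] e /=; first by rewrite big_seq1.
move=> /andP [/eqP link ps]; rewrite big_cons IH // link; ring.
Qed.

(* g(v) = sum of the edges of P(v); this inverts phi'' on V_+. *)
Definition edge_sum (s : seq Edge) : ncexpr F Edge := nc_sum [seq nc_var F e | e <- s].

Definition lift (u : Vplus) : ncexpr F Edge := edge_sum (to_star (val u)).

Lemma ncval_edge_sum s h : ncval (edge_sum s) h = \sum_(e <- s) h [:: e].
Proof. by rewrite ncval_sum big_map; apply: eq_bigr => e _; rewrite ncval_var. Qed.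

(* g(ivar v) = sum of P(v), including v = * where both sides vanish. *)
Lemma lift_ivar v h :
  ncval (ivar v) (fun u => ncval (subst_word lift u) h) = \sum_(e <- to_star v) h [:: e].
Proof.
rewrite /ivar; case: insubP => [u _ uv | ].
  rewrite ncval_var ncval_subst_word_cons.
  rewrite (ncval_ext _ (fun a => ncval_one _)) ncval_edge_sum uv.
  by apply: eq_bigr => e _; rewrite cats0.
rewrite lt0n negbK => /eqP /layer0_star ->.
by rewrite ncval_zero /to_star layer_star big_nil.
Qed.

Lemma ivar_star h : ncval (ivar star) h = 0.
Proof. by rewrite /ivar insubN ?layer_star // ncval_zero. Qed.

(* phi''(g(u)) = u: phi'' telescopes along P(u). *)
Lemma phi2_lift (u : Vplus) : nc_equiv (nc_subst phi2 (lift u)) (nc_var F u).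
Proof.
move=> h; rewrite ncval_subst ncval_edge_sum ncval_var.
have [sz [ps ends]] := to_star_spec (val u).
move: sz ps ends; rewrite -/(lift u).
case: (to_star (val u)) => [|e s] sz; first by move: (valP u); rewrite -sz.
move=> ps [e1 e2].
rewrite (eq_bigr (fun d : Edge => ncval (ivar (val d).1) h - ncval (ivar (val d).2) h)).
  by rewrite (telescope (fun x => ncval (ivar x) h)) // e1 e2 ivar_star subr0 /ivar valK ncval_var.
move=> d _; rewrite ncval_subst_word_cons (ncval_ext _ (fun a => ncval_one _)).
by rewrite (ncval_ext _ (fun a => congr1 h (cats0 a))) ncval_sub.
Qed.

(* e - g(phi''(e)) lies in R: it is minus the relation
   e(pi, m-1) - e(pi', m-1) for the paths pi = e.P(w) and pi' = P(v). *)
Lemma edge_lift_phi2 (e : Edge) :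
  nc_in_ideal (@R_gen V adj F) (nc_sub (nc_var F e) (nc_subst lift (phi2 e))).
Proof.
set v := (val e).1; set w := (val e).2.
have Hl : layer v = (layer w).+1 by apply: adj_layer (valP e).
have [szw Pw] := to_star_spec w; have [szv Pv] := to_star_spec v.
have Pe : path_to_star v (e :: to_star w).
  by apply: path_to_star_cons Pw; rewrite /v /w -surjective_pairing.
move: szv Pv; case Ev : (to_star v) => [|e' s'] szv Pv; first by rewrite Hl in szv.
have sz' : size s' = size (to_star w) by move: szv; rewrite Hl szw => -[].
pose r := nc_sub (nc_elem F (e :: to_star w) (size (to_star w)))
                   (nc_elem F (e' :: s') (size (to_star w))).
have Rr : @R_gen V adj F r.
  exists (e :: to_star w), (e' :: s'), (size (to_star w)).
  split; first by case: Pe.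
  split; first by case: Pv.
  split; first by apply: path_to_star_gapprox Pe Pv _; rewrite /= sz'.
  by split; first exact: leqnSn.
apply: (ideal_equiv (ideal_scale (-1) (ideal_gen Rr))) => h.
rewrite /r ncval_scale ncval_sub elem_subtop -sz' elem_subtop ncval_sub ncval_var.
rewrite ncval_subst ncval_sub !lift_ivar Ev !big_cons; ring.
Qed.
End LayeredGraph.

Theorem mainTheorem2 (F : fieldType) (V : finType) (layer : V -> nat)
    (adj : rel V) (star : V) :
  layered_unique_min layer adj star ->
  exists (f : Edge adj -> ncexpr F (Vplus layer))
         (g : Vplus layer -> ncexpr F (Edge adj)),
    (forall p, nc_in_ideal (@R_gen V adj F) p ->
               nc_in_ideal (@RV_gen V layer adj F) (nc_subst f p)) /\
    (forall q, nc_in_ideal (@RV_gen V layer adj F) q ->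
               nc_in_ideal (@R_gen V adj F) (nc_subst g q)) /\
    (forall p, nc_in_ideal (@R_gen V adj F)
                 (nc_sub p (nc_subst g (nc_subst f p)))) /\
    (forall q, nc_in_ideal (@RV_gen V layer adj F)
                 (nc_sub q (nc_subst f (nc_subst g q)))).
Proof.
move=> graphP; exists (@phi2 V layer adj F), (@lift F V layer adj).
(* The generators of R_V are exactly the phi''-images of those of R. *)
have etilde_sub s s' i : nc_equiv (nc_sub (@etilde V layer adj F s i) (@etilde V layer adj F s' i))
    (nc_subst (@phi2 V layer adj F) (nc_sub (nc_elem F s i) (nc_elem F s' i))).
  by move=> h; rewrite /etilde ncval_subst !ncval_sub -!ncval_subst.
apply: quotient_iso.
- move=> _ [s [s' [i [ps [ps' [apx [le ->]]]]]]].
  apply: ideal_equiv (etilde_sub s s' i).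
  by apply: ideal_gen; exists s, s', i.
- move=> _ [s [s' [i [ps [ps' [apx [le ->]]]]]]].
  by exists (nc_sub (nc_elem F s i) (nc_elem F s' i)) => //; exists s, s', i.
- exact: edge_lift_phi2 graphP.
- exact: phi2_lift graphP.
Qed.
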